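(* Let $G$ be a finite group with $|G|\ge2$, $S\subseteq G$ symmetric, $H=\mathrm{Cay}(G,S)$ unweighted, $\alpha\in(0,1)$, and $C\ge1$. Let $S_\alpha=\{s\in\bar S:\mathrm{imp}(s)\ge\alpha\}$. Then there exist $\ell\ge\frac{\alpha}{C\log^2|G|}|S_\alpha|$, distinct $s_1,\dots,s_\ell\in S_\alpha$ and vectors $v_1,\dots,v_\ell\in\mathbb{R}^G$ with $v_i^\top L_Hv_i>0$ such that $\mathrm{score}(s_i,v_i)\ge\alpha$ for all $i\in[\ell]$ and $\mathrm{score}(s_i,v_j)\le\frac{\alpha}{C\log^2|G|}$ for all $1\le j<i\le\ell$.
   Context: Logarithms are base 2. For $g\in G$, $A_g\in\{0,1\}^{G\times G}$ is the permutation matrix with $(A_g)_{u,v}=1$ iff $v=ug$. $S$ symmetric means $s\in S\Rightarrow s^{-1}\in S$; $\bar S\subseteq S$ contains exactly one element of each pair $\{s,s^{-1}\}$ with $s\neq s^{-1}$ and every $s\in S$ with $s=s^{-1}$. $L_s=2I-A_s-A_{s^{-1}}$ if $s\ne s^{-1}$, $L_s=I-A_s$ if $s=s^{-1}$; $L_H=\sum_{s\in\bar S}L_s$. For $v$ with $v^\top L_Hv>0$, $\mathrm{score}(s,v)=\frac{v^\top L_sv}{v^\top L_Hv}$, and $\mathrm{imp}(s)=\max\{\mathrm{score}(s,v):v^\top L_Hv>0\}$. *)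

From HB Require Import structures.
From mathcomp Require Import all_boot all_order all_algebra all_fingroup.
From mathcomp Require Import all_classical all_reals.
From mathcomp Require Import exp.
Set Implicit Arguments. Unset Strict Implicit. Unset Printing Implicit Defensive.
Import Order.TTheory GRing.Theory Num.Theory.
Local Open Scope ring_scope.
Local Open Scope classical_set_scope.

Section Defs.
Variables (R : realType) (gT : finGroupType).

Definition log2 (x : R) : R := ln x / ln 2.

Definition gmx := gT -> gT -> R.

Definition Aperm (g : gT) : gmx := fun u v => ((v == (u * g)%g) : bool)%:R.
Definition Iden : gmx := fun u v => ((u == v) : bool)%:R.

Definition qf (M : gmx) (v : gT -> R) : R :=
  \sum_(u : gT) \sum_(w : gT) v u * M u w * v w.

Definition symmetric_set (S : {set gT}) : Prop :=
  forall s, s \in S -> (s^-1)%g \in S.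

Definition is_Sbar (S Sbar : {set gT}) : Prop :=
  Sbar \subset S /\
  (forall s, s \in S -> s = (s^-1)%g -> s \in Sbar) /\
  (forall s, s \in S -> s != (s^-1)%g -> (s \in Sbar) (+) ((s^-1)%g \in Sbar)).

Definition Lgen (s : gT) : gmx := fun u w =>
  if s != (s^-1)%g then 2 * Iden u w - Aperm s u w - Aperm (s^-1)%g u w
  else Iden u w - Aperm s u w.

Definition LH (Sbar : {set gT}) : gmx := fun u w => \sum_(s in Sbar) Lgen s u w.

Definition score (Sbar : {set gT}) (s : gT) (v : gT -> R) : R :=
  qf (Lgen s) v / qf (LH Sbar) v.

(* imp(s) = max { score(s,v) : v^T L_H v > 0 }, written as a supremum
   (the maximum is attained, so this is the same value) *)
Definition imp (Sbar : {set gT}) (s : gT) : R :=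
  sup [set score Sbar s v | v in [set v : gT -> R | 0 < qf (LH Sbar) v]].

Definition S_alpha (Sbar : {set gT}) (alpha : R) : {set gT} :=
  [set s in Sbar | alpha <= imp Sbar s].

End Defs.

Arguments score {R gT} Sbar s v.
Arguments imp {R gT} Sbar s.
Arguments S_alpha {R gT} Sbar alpha.
Arguments qf {R gT} M v.
Arguments LH {R gT} Sbar _ _.
Arguments Lgen {R gT} s _ _.

(** The Laplacian of the Cayley graph splits as a sum of nonnegative edge
    energies, so for every [v] the scores [score(t, v)], [t \in Sbar], are
    nonnegative and sum to at most [1]. Each [s] in [S_alpha] has a witness
    [v_s] with [score(s, v_s) >= alpha]: the supremum defining [imp] is
    attained, by compactness once the kernel of [L_H] is quotiented out and
    [v] normalised. Pick such an [s] and discard every generator [t] with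
    [score(t, v_s) >= eps]; there are at most [1/eps] of them, [s] among
    them since [eps <= alpha], and all survivors score less than [eps] on
    [v_s]. Iterating yields at least [eps |S_alpha|] generators in the
    required triangular pattern. The logarithmic factor only serves to make
    [eps <= alpha]. *)
From HB Require Import structures.
From mathcomp Require Import all_boot all_order all_algebra all_fingroup.
From mathcomp Require Import all_classical all_reals.
From mathcomp Require Import exp topology normedtype derive.
From mathcomp Require Import ring lra.
Set Implicit Arguments. Unset Strict Implicit. Unset Printing Implicit Defensive.
Import Order.TTheory GRing.Theory Num.Theory.
Import numFieldNormedType.Exports ArrowAsProduct.
Local Open Scope ring_scope.
Local Open Scope classical_set_scope.

Section GreedySelection.
Variables (R : realFieldType) (I : finType) (V : Type).
Variables (A : {set I}) (f : I -> V -> R) (w : I -> V) (eps : R).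
Hypotheses (f_ge0 : forall t v, 0 <= f t v)
           (mass_le1 : forall s, \sum_(t in A) f t (w s) <= 1).

Lemma greedy_selection (T : {set I}) :
  T \subset A -> {in T, forall s, eps <= f s (w s)} ->
  exists2 ls : seq I,
    [/\ uniq ls, {subset ls <= T} & pairwise (fun a b => f b (w a) < eps) ls]
    & eps * #|T|%:R <= (size ls)%:R.
Proof.
elim: {T}_.+1 {-2}T (ltnSn #|T|) => // n IH T ltTn sTA selfT.
have [->|[s Ts]] := set_0Vmem T; first by exists [::]; rewrite ?cards0 ?mulr0.
pose T' := [set t in T | f t (w s) < eps].
have T's : s \notin T' by rewrite inE Ts -leNgt selfT.
have sT'T : T' \subset T by apply/fintype.subsetP => t; rewrite inE => /andP[].
have ltT'n : (#|T'| < n)%N.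
  rewrite -ltnS (leq_trans _ ltTn) // ltnS proper_card //.
  by apply/properP; split=> //; exists s.
have [|ls [uls sls pls] szls] := IH T' ltT'n (fintype.subset_trans sT'T sTA).
  by move=> t /(fintype.subsetP sT'T); apply: selfT.
exists (s :: ls); first split.
- by rewrite /= uls andbT; apply: contra T's => /sls.
- by move=> t; rewrite inE => /predU1P[->|/sls/(fintype.subsetP sT'T)].
- rewrite pairwise_cons pls andbT; apply/allP => t /sls.
  by rewrite inE => /andP[].
have discarded_le1 : eps * #|T :\: T'|%:R <= 1.
  have sDA : T :\: T' \subset A := fintype.subset_trans (subsetDl T T') sTA.
  apply: le_trans (mass_le1 s).
  rewrite (big_setID (T :\: T')) /= (finset.setIidPr sDA).
  rewrite -[X in X <= _]addr0 lerD ?sumr_ge0 // mulr_natr -sumr_const.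
  apply: ler_sum => t; rewrite !inE => /andP[].
  by case: (t \in T); rewrite -?leNgt.
rewrite -(cardsID T' T) (finset.setIidPr sT'T) natrD mulrDr /= -add1n natrD.
by rewrite addrC lerD.
Qed.

End GreedySelection.

Section CayleyLaplacian.
Variables (R : realType) (gT : finGroupType).
Implicit Types (v : gT -> R) (s t u : gT).

Definition edge_energy t v : R := \sum_u (v u - v (u * t)%g) ^+ 2.

(* [edge_energy t] counts each edge [{u, u t}] twice when [t] is an
   involution. *)
Definition edge_weight t : R := if t != (t^-1)%g then 1 else 2^-1.

Lemma edge_weight_gt0 t : 0 < edge_weight t.
Proof. by rewrite /edge_weight; case: ifP; rewrite ?invr_gt0. Qed.

Lemma sum_mulg (F : gT -> R) t : \sum_u F (u * t)%g = \sum_u F u.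
Proof. by rewrite [RHS](reindex_inj (mulIg t)). Qed.

Lemma sum_delta (F : gT -> R) u : \sum_w ((w == u)%:R * F w) = F u.
Proof.
by rewrite (bigD1 u) //= eqxx mul1r big1 ?addr0 // => w /negPf ->; rewrite mul0r.
Qed.

Lemma edge_energyE t v :
  edge_energy t v = 2 * \sum_u v u ^+ 2 - 2 * \sum_u v u * v (u * t)%g.
Proof.
have -> : edge_energy t v = \sum_u v u ^+ 2 - 2 * \sum_u v u * v (u * t)%g
    + \sum_u v (u * t)%g ^+ 2.
  rewrite /edge_energy mulr_sumr -sumrB -big_split /=.
  by apply: eq_bigr => u _; ring.
by rewrite (sum_mulg (fun u => v u ^+ 2)); ring.
Qed.

Lemma qf_Aperm g v : qf (Aperm R g) v = \sum_u v u * v (u * g)%g.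
Proof.
rewrite /qf; apply: eq_bigr => u _.
rewrite -(sum_delta (fun w => v u * v w) (u * g)%g).
by apply: eq_bigr => w _; rewrite /Aperm; ring.
Qed.

Lemma qf_Iden v : qf (@Iden R gT) v = \sum_u v u ^+ 2.
Proof.
rewrite /qf; apply: eq_bigr => u _.
rewrite expr2 -(sum_delta (fun w => v u * v w) u).
by apply: eq_bigr => w _; rewrite /Iden eq_sym; ring.
Qed.

Lemma qf_ApermV g v : qf (Aperm R (g^-1)%g) v = qf (Aperm R g) v.
Proof.
rewrite !qf_Aperm -(sum_mulg _ g).
by apply: eq_bigr => u _; rewrite mulgK mulrC.
Qed.

Lemma qf_Lgen t v : qf (Lgen t) v = edge_weight t * edge_energy t v.
Proof.
rewrite edge_energyE /edge_weight; case: ifP => ht.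
- have -> : qf (Lgen t) v =
      2 * qf (@Iden R gT) v - qf (Aperm R t) v - qf (Aperm R (t^-1)%g) v.
    rewrite /qf /Lgen ht mulr_sumr -!sumrB; apply: eq_bigr => u _.
    by rewrite mulr_sumr -!sumrB; apply: eq_bigr => w _; ring.
  by rewrite qf_ApermV qf_Iden qf_Aperm; ring.
- have -> : qf (Lgen t) v = qf (@Iden R gT) v - qf (Aperm R t) v.
    rewrite /qf /Lgen ht -sumrB; apply: eq_bigr => u _.
    by rewrite -sumrB; apply: eq_bigr => w _; ring.
  by rewrite qf_Iden qf_Aperm; field.
Qed.

Lemma edge_energy_ge0 t v : 0 <= edge_energy t v.
Proof. by apply: sumr_ge0 => u _; apply: sqr_ge0. Qed.

Lemma qf_Lgen_ge0 t v : 0 <= qf (Lgen t) v.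
Proof. by rewrite qf_Lgen mulr_ge0 ?edge_energy_ge0 // ltW ?edge_weight_gt0. Qed.

Lemma qf_Lgen_eq0 t v : qf (Lgen t) v = 0 -> forall u, v (u * t)%g = v u.
Proof.
rewrite qf_Lgen => /eqP; rewrite mulf_eq0 gt_eqF ?edge_weight_gt0 //= => /eqP.
move=> /(psumr_eq0P (fun u _ => sqr_ge0 _)) v_t u; apply/esym/eqP.
by rewrite -subr_eq0 -sqrf_eq0 v_t.
Qed.

Lemma qfZ (M : gmx R gT) c v : qf M (fun x => c * v x) = c ^+ 2 * qf M v.
Proof.
rewrite /qf mulr_sumr; apply: eq_bigr => u _; rewrite mulr_sumr.
by apply: eq_bigr => w _; ring.
Qed.

Lemma qf_Lgen_subr t v (h : gT -> R) : (forall u, h (u * t)%g = h u) ->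
  qf (Lgen t) (fun x => v x - h x) = qf (Lgen t) v.
Proof.
move=> h_t; rewrite !qf_Lgen; congr (_ * _); apply: eq_bigr => u _.
by rewrite h_t; congr (_ ^+ 2); ring.
Qed.

Variable Sbar : {set gT}.

Lemma qf_LH v : qf (LH Sbar) v = \sum_(t in Sbar) qf (Lgen t) v.
Proof.
rewrite /qf /LH.
under eq_bigr => u _ do under eq_bigr => w _ do rewrite mulr_sumr mulr_suml.
by under eq_bigr => u _ do rewrite exchange_big; rewrite exchange_big.
Qed.

Lemma qf_LH_ge0 v : 0 <= qf (LH Sbar) v.
Proof. by rewrite qf_LH sumr_ge0 // => t _; apply: qf_Lgen_ge0. Qed.

Lemma score_ge0 t v : 0 <= score Sbar t v.
Proof. by rewrite /score divr_ge0 ?qf_Lgen_ge0 ?qf_LH_ge0. Qed.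

Lemma sum_score_le1 v : \sum_(t in Sbar) score Sbar t v <= 1.
Proof.
rewrite /score -mulr_suml -qf_LH.
have [->|qf_neq0] := eqVneq (qf (LH Sbar) v) 0; first by rewrite mul0r ler01.
by rewrite divff.
Qed.

Lemma qf_LH_eq0 v : qf (LH Sbar) v = 0 ->
  forall t, t \in Sbar -> forall u, v (u * t)%g = v u.
Proof.
rewrite qf_LH => /(psumr_eq0P (fun t _ => qf_Lgen_ge0 t v)) v_S t St.
exact/qf_Lgen_eq0/v_S.
Qed.

Lemma qf_LH_subr v (h : gT -> R) :
  (forall t, t \in Sbar -> forall u, h (u * t)%g = h u) ->
  qf (LH Sbar) (fun x => v x - h x) = qf (LH Sbar) v.
Proof.
move=> h_S; rewrite !qf_LH; apply: eq_bigr => t St.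
by rewrite (qf_Lgen_subr _ (h_S t St)).
Qed.

Lemma score_subr t v (h : gT -> R) :
  (forall t, t \in Sbar -> forall u, h (u * t)%g = h u) -> t \in Sbar ->
  score Sbar t (fun x => v x - h x) = score Sbar t v.
Proof.
by move=> h_S St; rewrite /score (qf_LH_subr v h_S) (qf_Lgen_subr _ (h_S t St)).
Qed.

Lemma scoreZ t c v : c != 0 -> score Sbar t (fun x => c * v x) = score Sbar t v.
Proof.
by move=> c_neq0; rewrite /score !qfZ -mulf_div divff ?mul1r ?expf_neq0.
Qed.

End CayleyLaplacian.

Section ImportanceAttained.
Variables (R : realType) (gT : finGroupType) (Sbar : {set gT}).
Implicit Types (v w : gT -> R).

Definition cayley_adj : rel gT :=
  fun x y => [exists t in Sbar, (y == x * t)%g || (x == y * t)%g].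

Lemma cayley_adj_sym : symmetric cayley_adj.
Proof. by move=> x y; apply: eq_existsb => t; rewrite orbC. Qed.

Let connect_cayley_sym := sym_connect_sym cayley_adj_sym.

Definition comp_root x := fingraph.root cayley_adj x.

Lemma comp_root_mulg t u : t \in Sbar -> comp_root (u * t)%g = comp_root u.
Proof.
move=> St; apply/esym/(fingraph.rootP connect_cayley_sym)/connect1.
by apply/existsP; exists t; rewrite St eqxx.
Qed.

Lemma comp_root_idem x : comp_root (comp_root x) = comp_root x.
Proof. exact: (fingraph.root_root connect_cayley_sym). Qed.

Lemma qf_LH_eq0_connect v : qf (LH Sbar) v = 0 ->
  forall x y, connect cayley_adj x y -> v x = v y.
Proof.
move=> qf0 x y /connectP[p]; elim: p x => [|z p IH] x /=; first by move=> _ ->.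
case/andP => /existsP[t /andP[St /orP[]/eqP->]] pz lst;
  by rewrite -(IH _ pz lst) (qf_LH_eq0 qf0 St).
Qed.

(* Subtracting from [v] its values at the component roots (a kernel vector of
   [L_H]) and normalising changes no score, so every score vector is realised
   on this compact set, on which [L_H] is positive definite. *)
Definition reduced_sphere : set (gT -> R) :=
  [set w | \sum_x w x ^+ 2 = 1] `&` [set w | \sum_x w (comp_root x) ^+ 2 = 0].

Lemma sum_sqr_eq0 v : \sum_x v x ^+ 2 = 0 -> forall x, v x = 0.
Proof.
move=> /(psumr_eq0P (fun x _ => sqr_ge0 (v x))) v0 x.
by apply/eqP; rewrite -sqrf_eq0 v0.
Qed.

Lemma reduced_sphere_qf_gt0 w : reduced_sphere w -> 0 < qf (LH Sbar) w.
Proof.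
case=> /= w_unit w_root; rewrite lt_def qf_LH_ge0 andbT; apply/eqP => qf0.
have w0 x : w x = 0.
  rewrite (qf_LH_eq0_connect qf0 (connect_root _ x)).
  exact: (sum_sqr_eq0 (v := fun x => w (comp_root x)) w_root).
move: w_unit; rewrite big1 => [/esym/eqP|x _]; last by rewrite w0 expr0n.
by rewrite oner_eq0.
Qed.

Lemma reduced_sphere_scores v : 0 < qf (LH Sbar) v ->
  exists2 w, reduced_sphere w &
    {in Sbar, forall t, score Sbar t w = score Sbar t v}.
Proof.
move=> qf_gt0; pose h x := v (comp_root x); pose v' x := v x - h x.
have h_S t : t \in Sbar -> forall u, h (u * t)%g = h u.
  by move=> St u; rewrite /h comp_root_mulg.
have qf'_gt0 : 0 < qf (LH Sbar) v' by rewrite (qf_LH_subr v h_S).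
have n_gt0 : 0 < \sum_x v' x ^+ 2.
  rewrite lt_def sumr_ge0 ?andbT => [|x _]; last exact: sqr_ge0.
  apply/eqP => /sum_sqr_eq0 v'0; move: qf'_gt0.
  suff -> : qf (LH Sbar) v' = 0 by rewrite ltxx.
  by rewrite /qf big1 // => u _; rewrite v'0 big1 // => x _; rewrite !mul0r.
pose c := (Num.sqrt (\sum_x v' x ^+ 2))^-1.
have c_neq0 : c != 0 by rewrite invr_eq0 gt_eqF ?sqrtr_gt0.
exists (fun x => c * v' x).
  split=> /=; last first.
    by rewrite big1 // => x _; rewrite /v' /h comp_root_idem subrr mulr0 expr0n.
  under eq_bigr do rewrite exprMn.
  by rewrite -mulr_sumr exprVn sqr_sqrtr ?ltW // mulVf // gt_eqF.
by move=> t St; rewrite scoreZ // (score_subr v h_S St).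
Qed.

Let continuous_mulf (f g : (gT -> R) -> R) :
  continuous f -> continuous g -> continuous (fun w => f w * g w).
Proof. by move=> cf cg w; apply: continuousM (cf w) (cg w). Qed.

Lemma continuous_sum_sqr (h : gT -> gT) :
  continuous (fun w : gT -> R => \sum_x w (h x) ^+ 2).
Proof.
apply: continuous_big => [|x _]; first exact: add_continuous.
by apply: continuous_mulf; apply: proj_continuous.
Qed.

Lemma closed_sum_sqr_eq (h : gT -> gT) (c : R) :
  closed [set w : gT -> R | \sum_x w (h x) ^+ 2 = c].
Proof.
apply: (@preimage_closed _ _ _ [set x | x = c]); last exact: closed_eq.
by move=> w _; apply: continuous_sum_sqr.
Qed.

Lemma continuous_qf (M : gmx R gT) : continuous (qf M).
Proof.
apply: continuous_big => [|u _]; first exact: add_continuous.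
apply: continuous_big => [|x _]; first exact: add_continuous.
apply: continuous_mulf; last exact: proj_continuous.
by apply: continuous_mulf; [apply: proj_continuous | apply: cst_continuous].
Qed.

Lemma reduced_sphere_compact : compact reduced_sphere.
Proof.
have cube_compact : compact [set w : gT -> R | forall x, `[-1, 1] (w x)].
  by have := tychonoff (fun _ : gT => @segment_compact R (-1) 1).
apply: (subclosed_compact _ cube_compact); last first.
  move=> w [/= w_unit _] x; have : w x ^+ 2 <= 1.
    by rewrite -w_unit (bigD1 x) //= lerDl sumr_ge0 // => y _; apply: sqr_ge0.
  by rewrite /= in_itv /= => ?; apply/andP; split; nra.
apply: closedI; first exact: (@closed_sum_sqr_eq id 1).
exact: (@closed_sum_sqr_eq comp_root 0).
Qed.

Lemma imp_attained s (alpha : R) : s \in Sbar -> 0 < alpha -> alpha <= imp Sbar s ->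
  exists2 v, 0 < qf (LH Sbar) v & alpha <= score Sbar s v.
Proof.
move=> Ss alpha_gt0 le_imp.
have [[v0 qf_v0]|no_v] := pselect (exists v, 0 < qf (LH Sbar) v); last first.
  suff imp0 : imp Sbar s = 0 :> R by move: alpha_gt0; rewrite ltNge -imp0 le_imp.
  rewrite /imp; set F := (X in sup X); suff -> : F = set0 by rewrite sup0.
  by apply/seteqP; split=> // y [v qf_v _]; apply: no_v; exists v.
have [w0 sph_w0 _] := reduced_sphere_scores qf_v0.
have score_cont : {within reduced_sphere, continuous (score Sbar s)}.
  apply: continuous_in_subspaceT => w /set_mem/reduced_sphere_qf_gt0/lt0r_neq0 qf_w.
  have qf_LH_cont := continuousV qf_w (@continuous_qf (LH Sbar) w).
  exact: (continuousM (@continuous_qf (Lgen s) w) qf_LH_cont).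
have [c sph_c c_max] :=
  compact_EVT_max (ex_intro _ w0 sph_w0) reduced_sphere_compact score_cont.
exists c; first exact/reduced_sphere_qf_gt0/set_mem.
apply: le_trans le_imp _; apply: ge_sup; first by exists (score Sbar s v0), v0.
move=> _ [v qf_v <-]; have [w sph_w score_w] := reduced_sphere_scores qf_v.
by rewrite -score_w //; apply/c_max/mem_set.
Qed.

Lemma S_alpha_witnesses (alpha : R) : 0 < alpha ->
  exists wit : gT -> gT -> R, {in S_alpha Sbar alpha, forall s,
    0 < qf (LH Sbar) (wit s) /\ alpha <= score Sbar s (wit s)}.
Proof.
move=> alpha_gt0.
suff /choice[wit witP] : forall s, exists v, s \in S_alpha Sbar alpha ->
    0 < qf (LH Sbar) v /\ alpha <= score Sbar s v by exists wit.
move=> s; case: (boolP (s \in S_alpha Sbar alpha)) => [|_]; last by exists 0.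
rewrite inE => /andP[Ss le_imp].
by have [v] := imp_attained Ss alpha_gt0 le_imp; exists v.
Qed.

End ImportanceAttained.

Lemma log2_nat_ge1 (R : realType) n : (1 < n)%N -> 1 <= log2 (n%:R : R).
Proof.
move=> n_gt1; rewrite /log2 ler_pdivlMr ?mul1r ?ln_gt0 ?ltr1n //.
by rewrite ler_ln ?posrE ?ler_nat // ltr0n ltnW.
Qed.

Theorem mainTheorem5 (R : realType) (gT : finGroupType)
  (S Sbar : {set gT}) (alpha C : R) :
  (1 < #|gT|)%N ->
  symmetric_set S ->
  is_Sbar S Sbar ->
  0 < alpha < 1 ->
  1 <= C ->
  let eps := alpha / (C * (log2 (#|gT|%:R : R)) ^+ 2) in
  exists (l : nat) (s : 'I_l -> gT) (v : 'I_l -> gT -> R),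
    eps * (#|S_alpha Sbar alpha|)%:R <= l%:R /\
    [/\ injective s,
        forall i, s i \in S_alpha Sbar alpha,
        forall i, 0 < qf (LH Sbar) (v i),
        forall i, alpha <= score Sbar (s i) (v i)
      & forall i j : 'I_l, (j < i)%N -> score Sbar (s i) (v j) <= eps].
Proof.
move=> gT_gt1 _ _ /andP[alpha_gt0 _] C_ge1 eps.
have eps_le_alpha : eps <= alpha.
  have log_ge1 := log2_nat_ge1 R gT_gt1.
  have denom_ge1 : 1 <= C * log2 (#|gT|%:R : R) ^+ 2 by nra.
  by rewrite ler_pdivrMr ?(lt_le_trans ltr01) // ler_peMr // ltW.
pose Sa := S_alpha Sbar alpha.
have [wit witP] := S_alpha_witnesses Sbar alpha_gt0.
have Sa_sub : Sa \subset Sbar by apply/fintype.subsetP => s; rewrite inE => /andP[].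
have wit_self : {in Sa, forall s, eps <= score Sbar s (wit s)}.
  by move=> s /witP[_]; apply: le_trans.
have [ls [uls sls pls] szls] := greedy_selection (score_ge0 Sbar)
  (fun s => sum_score_le1 Sbar (wit s)) Sa_sub wit_self.
have /(pairwiseP 1%g) ls_ordered := pls.
have ls_Sa (i : 'I_(size ls)) : nth 1%g ls i \in Sa by exact/sls/mem_nth.
exists (size ls), (fun i => nth 1%g ls i), (fun i => wit (nth 1%g ls i)).
split=> //; split.
- by move=> i j /eqP; rewrite nth_uniq ?ltn_ord // => /eqP/val_inj.
- exact: ls_Sa.
- by move=> i; case: (witP _ (ls_Sa i)).
- by move=> i; case: (witP _ (ls_Sa i)).
- by move=> i j lt_ji; apply: ltW (ls_ordered j i (ltn_ord j) (ltn_ord i) lt_ji).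
Qed.
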